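(* For every strategy profile $s$ with $S_0(s)\vee S_1(s)$: if $\mathsf{SAcBes}(s)$ then $\Downarrow(s)$.
   Context: Let $P=\{A,B\}$ and $\mathrm{Choice}=\{d,r\}$; a payoff function is $f:P\to\mathbb{R}$. Strategy profiles are elements of the final coalgebra of $X\mapsto\mathbb{R}^P+P\times\mathrm{Choice}\times X\times X$ (finite or infinite trees $\langle f\rangle$ or $\langle p,c,s_d,s_r\rangle$, equality being bisimilarity). Convergence $\downarrow$ is the least predicate with $\downarrow(s)$ iff $s=\langle f\rangle$, or $s=\langle p,d,s_d,s_r\rangle$ and $\downarrow(s_d)$, or $s=\langle p,r,s_d,s_r\rangle$ and $\downarrow(s_r)$. Strong convergence $\Downarrow$ is the greatest predicate with $\Downarrow(s)$ iff $s=\langle f\rangle$, or $s=\langle p,c,s_d,s_r\rangle$ with $\downarrow(s)$, $\Downarrow(s_d)$, $\Downarrow(s_r)$. For a predicate $\Phi$, $\Box\Phi$ is the greatest predicate such that $\Box\Phi(s)$ iff $\Phi(s)$ and, whenever $s=\langle p,c,s_d,s_r\rangle$, $\Box\Phi(s_d)$ and $\Box\Phi(s_r)$. Let $f_{0,1}=(A\mapsto0,B\mapsto1)$ and $f_{1,0}=(A\mapsto1,B\mapsto0)$. $S_0,S_1$ are the greatest predicates with $S_0(s)$ iff $s=\langle A,c,\langle f_{0,1}\rangle,s'\rangle$ with $S_1(s')$, and $S_1(s)$ iff $s=\langle B,c,\langle f_{1,0}\rangle,s'\rangle$ with $S_0(s')$. $\mathsf{AcBes}$ is the least predicate such that $\mathsf{AcBes}(s)$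 holds iff: whenever $s=\langle p,c,\langle f\rangle,s'\rangle$, then ($p=A$, $f=f_{0,1}$, $c=r$, $\mathsf{AcBes}(s')$) or ($p=B$, $f=f_{1,0}$, and ($c=d$ or $\mathsf{AcBes}(s')$)). Finally $\mathsf{SAcBes}=\Box\,\mathsf{AcBes}$. *)

From Stdlib Require Import Reals.
Open Scope R_scope.

Inductive Agent : Type := A | B.
Inductive Choice : Type := d | r.

(* Final coalgebra of X |-> R^P + P x Choice x X x X *)
CoInductive StratProf : Type :=
| Leaf : (Agent -> R) -> StratProf
| Node : Agent -> Choice -> StratProf -> StratProf -> StratProf.

Inductive Conv : StratProf -> Prop :=
| conv_leaf : forall f, Conv (Leaf f)
| conv_d : forall p sd sr, Conv sd -> Conv (Node p d sd sr)
| conv_r : forall p sd sr, Conv sr -> Conv (Node p r sd sr).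

CoInductive SConv : StratProf -> Prop :=
| sconv_leaf : forall f, SConv (Leaf f)
| sconv_node : forall p c sd sr,
    Conv (Node p c sd sr) -> SConv sd -> SConv sr -> SConv (Node p c sd sr).

CoInductive Always (Phi : StratProf -> Prop) : StratProf -> Prop :=
| always_leaf : forall f, Phi (Leaf f) -> Always Phi (Leaf f)
| always_node : forall p c sd sr,
    Phi (Node p c sd sr) -> Always Phi sd -> Always Phi sr ->
    Always Phi (Node p c sd sr).

Definition f01 : Agent -> R := fun a => match a with A => 0 | B => 1 end.
Definition f10 : Agent -> R := fun a => match a with A => 1 | B => 0 end.

CoInductive S0 : StratProf -> Prop :=
| s0_intro : forall c s', S1 s' -> S0 (Node A c (Leaf f01) s')
with S1 : StratProf -> Prop :=
| s1_intro : forall c s', S0 s' -> S1 (Node B c (Leaf f10) s').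

Inductive AcBes : StratProf -> Prop :=
| acbes_intro : forall s,
    (forall p c f s', s = Node p c (Leaf f) s' ->
       (p = A /\ f = f01 /\ c = r /\ AcBes s') \/
       (p = B /\ f = f10 /\ (c = d \/ AcBes s'))) ->
    AcBes s.

Definition SAcBes : StratProf -> Prop := Always AcBes.

(* Profiles satisfying S_0 or S_1 form a single right-going spine of alternating A/B nodes
   whose left children are leaves.  At such a node AcBes sends A to the right and lets B
   either stop at its leaf or continue to the right with AcBes again; since AcBes is an
   inductive predicate this descent ends at a leaf, so the profile converges.  The box
   modality supplies AcBes at every node of the spine, and coinduction along the spine
   then gives strong convergence. *)


Lemma always_here (Phi : StratProf -> Prop) (s : StratProf) :
  Always Phi s -> Phi s.
Proof. intros H; destruct H; assumption. Qed.

Lemma always_right (Phi : StratProf -> Prop) (p : Agent) (c : Choice) (sd sr : StratProf) :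
  Always Phi (Node p c sd sr) -> Always Phi sr.
Proof. intros H; inversion H; assumption. Qed.

Lemma S0_or_S1_unfold (s : StratProf) :
  S0 s \/ S1 s ->
  exists p c f s', s = Node p c (Leaf f) s' /\ (S0 s' \/ S1 s').
Proof.
  intros [H | H]; destruct H as [c s' H'].
  - exists A, c, f01, s'; split; [reflexivity | right; exact H'].
  - exists B, c, f10, s'; split; [reflexivity | left; exact H'].
Qed.

(* The induction principle generated for [AcBes] gives no hypothesis for the nested
   occurrences, so the recursion is written directly on the proof of [AcBes s]. *)
Fixpoint conv_of_AcBes (s : StratProf) (H : AcBes s) {struct H} :
  S0 s \/ S1 s -> Conv s.
Proof.
  destruct H as [s step]; intros [HS | HS]; destruct HS as [c s' HS'].
  - destruct (step A c f01 s' eq_refl) as [(_ & _ & -> & Hacc) | (HB & _)].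
    + apply conv_r, (conv_of_AcBes s' Hacc); right; exact HS'.
    + discriminate HB.
  - destruct (step B c f10 s' eq_refl) as [(HA & _) | (_ & _ & Hstop)].
    + discriminate HA.
    + destruct c.
      * apply conv_d, conv_leaf.
      * destruct Hstop as [Hd | Hacc]; [discriminate Hd |].
        apply conv_r, (conv_of_AcBes s' Hacc); left; exact HS'.
Qed.

Theorem mainTheorem8 : forall s : StratProf,
  (S0 s \/ S1 s) -> SAcBes s -> SConv s.
Proof.
  cofix CH; intros s HS HA.
  pose proof (conv_of_AcBes s (always_here _ _ HA) HS) as Hconv.
  destruct (S0_or_S1_unfold s HS) as (p & c & f & s' & -> & HS').
  apply sconv_node.
  - exact Hconv.
  - apply sconv_leaf.
  - exact (CH s' HS' (always_right _ _ _ _ _ HA)).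
Qed.
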